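(* Let $M$ be a matroid on $E$ whose dual is transversal with presentation $\mathcal A=(A_1,\ldots,A_r)$, $r=r^*(M)$; let $e\in E$ and let $G$ be a minimal $(e,\mathcal A)$-presenting graph on vertex set $\mathcal A_e(E)$ for which the identity map is the presenting map. Let $i\in[r]$ and $\mathcal A'=(A_1,\ldots,A_{i-1},\mathrm{cl}_M(A_i),A_{i+1},\ldots,A_r)$. Define a graph $G'$ by: (i) if $e\notin\mathrm{cl}_M(A_i)-A_i$, then $G'=G$; (ii) if $e\in\mathrm{cl}_M(A_i)-A_i$, then $G'$ is obtained from $G$ by adding a vertex $i$ and an edge from $i$ to exactly one $j\in\mathcal A_e(\mathrm{cl}_M(A_i))$. Then $G'$ is a minimal $(e,\mathcal A')$-presenting graph (with the identity map as presenting map).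
   Context: $M^*=M[\mathcal A]$, the transversal matroid whose independent sets are the partial transversals of $\mathcal A$. For any sequence $\mathcal B=(B_1,\ldots,B_r)$ of subsets of $E$ and $X\subseteq E$: $\mathcal B(X)=\{i:B_i\subseteq X\}$, $\mathcal B_e(X)=\{i\in\mathcal B(X): e\in B_i\}$. For $U$ a vertex subset, $G[U]$ is the induced subgraph. A graph $H$ with vertex set $\mathcal B_e(E)$ is $(e,\mathcal B)$-presenting if for all distinct $i,j\in\mathcal B_e(E)$ the graph $H[\mathcal B_e(\mathrm{cl}_M(B_i\cup B_j))]$ is connected (closures taken in $M$); it is minimal if deleting any one edge yields a graph that is not $(e,\mathcal B)$-presenting. *)

From mathcomp Require Import all_boot.
Set Implicit Arguments. Unset Strict Implicit. Unset Printing Implicit Defensive.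

Record matroid (E : finType) := Matroid {
  indep : {set E} -> bool;
  indep0 : indep set0;
  indep_sub : forall I J : {set E}, J \subset I -> indep I -> indep J;
  indep_aug : forall I J : {set E}, indep I -> indep J -> #|I| < #|J| ->
     exists2 x, x \in J :\: I & indep (x |: I)
}.

Section MatroidDefs.
Variable E : finType.
Variable M : matroid E.

Definition mrank (X : {set E}) : nat :=
  \max_(I : {set E} | indep M I && (I \subset X)) #|I|.

Definition mcl (X : {set E}) : {set E} :=
  [set x | mrank (x |: X) == mrank X].

Definition mbasis (B : {set E}) : bool :=
  indep M B && [forall x, (x \notin B) ==> ~~ indep M (x |: B)].

Definition dual_indep (I : {set E}) : bool :=
  [exists B : {set E}, mbasis B && [disjoint I & B]].

Definition dual_rank : nat :=
  \max_(I : {set E} | dual_indep I) #|I|.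
End MatroidDefs.

Section Transversal.
Variables (E : finType) (r : nat).

Definition partial_transversal (A : 'I_r -> {set E}) (I : {set E}) : Prop :=
  exists f : E -> 'I_r, {in I &, injective f} /\ forall x, x \in I -> x \in A (f x).

(* B(X) = {i : B_i ⊆ X} ;  B_e(X) = {i ∈ B(X) : e ∈ B_i} *)
Definition idx_sub (B : 'I_r -> {set E}) (X : {set E}) : {set 'I_r} :=
  [set i | B i \subset X].
Definition idx_sub_e (B : 'I_r -> {set E}) (e : E) (X : {set E}) : {set 'I_r} :=
  [set i | (B i \subset X) && (e \in B i)].

(* Simple graphs on vertices drawn from 'I_r: a set of edges, each edge being
   a 2-element set of vertices; the vertex set is given separately. *)
Definition is_graph_on (V : {set 'I_r}) (Ed : {set {set 'I_r}}) : Prop :=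
  forall ed, ed \in Ed -> exists x y, [/\ x != y, x \in V, y \in V & ed = [set x; y]].

Definition induced_connected (Ed : {set {set 'I_r}}) (U : {set 'I_r}) : Prop :=
  forall u v, u \in U -> v \in U ->
    connect (fun x y => [&& x \in U, y \in U & [set x; y] \in Ed]) u v.

Variable M : matroid E.

Definition presenting (e : E) (B : 'I_r -> {set E}) (Ed : {set {set 'I_r}}) : Prop :=
  is_graph_on (idx_sub_e B e setT) Ed /\
  forall i j, i \in idx_sub_e B e setT -> j \in idx_sub_e B e setT -> i != j ->
    induced_connected Ed (idx_sub_e B e (mcl M (B i :|: B j))).

Definition minimal_presenting (e : E) (B : 'I_r -> {set E}) (Ed : {set {set 'I_r}}) : Prop :=
  presenting e B Ed /\ forall ed, ed \in Ed -> ~ presenting e B (Ed :\ ed).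
End Transversal.

(* Replacing A_i by cl(A_i) changes no closure cl(A_k u A_l), and for a flat F we have
   A_i \subset F iff cl(A_i) \subset F.  So for every flat F the vertex set A_e(F) only
   changes by whether i becomes a vertex, which happens exactly when e \in cl(A_i) - A_i.
   In that case i lies in A'_e(F) only if cl(A_i) \subset F, and then so does j; since G is
   connected on A_e(F) for every flat F (such an F contains cl(A_u u A_v) for all u, v in
   A_e(F)), hanging i on j keeps all the induced subgraphs connected.  For minimality,
   contracting the pendant edge ij maps a presenting G' - f onto a presenting G - f, while
   without ij the vertex i is isolated although i and j both lie in A'_e(cl(A'_i u A'_j)). *)

From mathcomp Require Import all_boot.
Set Implicit Arguments. Unset Strict Implicit. Unset Printing Implicit Defensive.

Section MatroidClosure.
Variables (E : finType) (M : matroid E).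

Definition mbasis_in (X I : {set E}) : bool :=
  [&& indep M I, I \subset X & #|I| == mrank M X].

Definition mflat (F : {set E}) : bool := mcl M F \subset F.

Lemma leq_card_mrank (X I : {set E}) : indep M I -> I \subset X -> #|I| <= mrank M X.
Proof. by move=> hI sIX; apply: leq_bigmax_cond; rewrite hI sIX. Qed.

Lemma mbasis_in_exists (X : {set E}) : exists I, mbasis_in X I.
Proof.
have hP : 0 < #|[pred I : {set E} | indep M I && (I \subset X)]|.
  by apply/card_gt0P; exists set0; rewrite inE indep0 sub0set.
have [I hI hmax] := eq_bigmax_cond (fun I : {set E} => #|I|) hP.
by exists I; move: hI; rewrite inE /mbasis_in /mrank -hmax eqxx andbT.
Qed.

Lemma mrank_mono (X Y : {set E}) : X \subset Y -> mrank M X <= mrank M Y.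
Proof.
move=> sXY; have [I /and3P[hI sIX /eqP <-]] := mbasis_in_exists X.
exact: leq_card_mrank hI (subset_trans sIX sXY).
Qed.

(* A largest independent K with I \subset K \subset Y is a basis of Y, by augmentation. *)
Lemma mbasis_in_extend (I Y : {set E}) :
  indep M I -> I \subset Y -> exists2 K, mbasis_in Y K & I \subset K.
Proof.
move=> hI sIY; pose P K := [&& indep M K, I \subset K & K \subset Y].
have PI : P I by rewrite /P hI subxx sIY.
case: (arg_maxnP (fun K : {set E} => #|K|) PI) => K /and3P[hK sIK sKY] maxK.
exists K => //; rewrite /mbasis_in hK sKY eqn_leq leq_card_mrank //=.
rewrite leqNgt; apply/negP => ltK.
have [J /and3P[hJ sJY /eqP cJ]] := mbasis_in_exists Y.
have [z /setDP[zJ zK] hzK] := indep_aug hK hJ (leq_trans ltK (eq_leq (esym cJ))).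
have /maxK : P (z |: K).
  by rewrite /P hzK (subset_trans sIK (subsetUr _ _)) subUset sub1set (subsetP sJY).
by rewrite /= cardsU1 zK add1n ltnn.
Qed.

Lemma mcl_indep_setU1 (X I : {set E}) x :
  mbasis_in X I -> x \in mcl M X -> indep M (x |: I) -> x \in I.
Proof.
case/and3P=> _ sIX /eqP cI; rewrite inE => /eqP rx hxI; apply/negPn/negP => xI.
have := leq_card_mrank hxI (setUS [set x] sIX).
by rewrite cardsU1 xI rx -cI add1n ltnn.
Qed.

Lemma sub_mcl (X : {set E}) : X \subset mcl M X.
Proof. by apply/subsetP=> x xX; rewrite inE (setUidPr _) // sub1set. Qed.

Lemma mclS (X Y : {set E}) : X \subset Y -> mcl M X \subset mcl M Y.
Proof.
move=> sXY; apply/subsetP=> x xclX; rewrite inE eqn_leq (mrank_mono (subsetUr _ _)) andbT.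
rewrite leqNgt; apply/negP => ltY.
have [I bI] := mbasis_in_exists X; have /and3P[hI sIX _] := bI.
have [K bK sIK] := mbasis_in_extend hI (subset_trans sIX sXY).
have /and3P[hK _ /eqP cK] := bK.
have [J /and3P[hJ sJ /eqP cJ]] := mbasis_in_exists (x |: Y).
have ltKJ : #|K| < #|J| by rewrite cK cJ.
have [z /setDP[zJ zK] hzK] := indep_aug hK hJ ltKJ.
(* z \in J \subset x |: Y: neither z = x (x \in cl X) nor z \in Y (K is a basis of Y). *)
suff: z \in K by rewrite (negbTE zK).
have /setU1P[zx|zY] := subsetP sJ z zJ.
- rewrite zx in hzK *; apply: (subsetP sIK); apply: mcl_indep_setU1 bI xclX _.
  exact: indep_sub (setUS [set x] sIK) hzK.
- exact: mcl_indep_setU1 bK (subsetP (sub_mcl Y) z zY) hzK.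
Qed.

Lemma mrank_mcl (X : {set E}) : mrank M (mcl M X) = mrank M X.
Proof.
apply/eqP; rewrite eqn_leq (mrank_mono (sub_mcl X)) andbT.
have [I bI] := mbasis_in_exists X; have /and3P[hI sIX /eqP <-] := bI.
have [K /and3P[hK sKcl /eqP <-] sIK] := mbasis_in_extend hI (subset_trans sIX (sub_mcl X)).
apply: subset_leq_card; apply/subsetP=> z zK.
apply: mcl_indep_setU1 bI (subsetP sKcl z zK) _.
by apply: indep_sub hK; rewrite subUset sub1set zK.
Qed.

Lemma mflat_mcl (X : {set E}) : mflat (mcl M X).
Proof.
apply/subsetP=> x; rewrite !inE mrank_mcl => /eqP rx.
rewrite eqn_leq (mrank_mono (subsetUr _ _)) andbT -rx.
exact/mrank_mono/setUS/sub_mcl.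
Qed.

Lemma mcl_sub_flat (X F : {set E}) : X \subset F -> mflat F -> mcl M X \subset F.
Proof. by move=> sXF; apply: subset_trans; apply: mclS. Qed.

Lemma mcl_squeeze (X Y : {set E}) : X \subset Y -> Y \subset mcl M X -> mcl M Y = mcl M X.
Proof.
move=> sXY sYX; apply/eqP; rewrite eqEsubset (mclS sXY) andbT.
exact: mcl_sub_flat sYX (mflat_mcl X).
Qed.

End MatroidClosure.

Lemma connect_map (T T' : finType) (e : rel T) (e' : rel T') (f : T -> T') :
  (forall x y, e x y -> f x = f y \/ e' (f x) (f y)) ->
  forall x y, connect e x y -> connect e' (f x) (f y).
Proof.
move=> he x y /connectP[p + ->]; elim: p x => [|z p IH] x /=; first by rewrite connect0.
case/andP=> /he exz /IH; apply: connect_trans.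
by case: exz => [->|/connect1].
Qed.

Section InducedConnectivity.
Variable r : nat.
Implicit Types (Ed : {set {set 'I_r}}) (U W : {set 'I_r}) (i j u v : 'I_r).

Definition induced_rel Ed U : rel 'I_r :=
  fun x y => [&& x \in U, y \in U & [set x; y] \in Ed].

Lemma induced_connect_sub Ed Ed' U U' u v :
  Ed \subset Ed' -> U \subset U' ->
  connect (induced_rel Ed U) u v -> connect (induced_rel Ed' U') u v.
Proof.
move=> sE sU; apply: connect_sub => x y /and3P[xU yU xy]; apply: connect1.
by rewrite /induced_rel (subsetP sU x xU) (subsetP sU y yU) (subsetP sE _ xy).
Qed.

Lemma induced_connected_pendant Ed U i j :
  j != i -> (i \in U -> j \in U) -> induced_connected Ed (U :\ i) ->
  induced_connected (Ed :|: [set [set i; j]]) U.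
Proof.
move=> ji ijU conn u v uU vU.
pose e' := induced_rel (Ed :|: [set [set i; j]]) U; change (connect e' u v).
pose f w := if w == i then j else w.
have fU w : w \in U -> f w \in U :\ i.
  by rewrite /f; case: eqP => [->|/eqP wi] wU; rewrite !inE ?ji ?ijU ?wi.
have hop w : w \in U -> connect e' w (f w) && connect e' (f w) w.
  rewrite /f; case: eqP => [->|_] iU; last by rewrite connect0.
  by rewrite !connect1 // /e' /induced_rel iU ijU // setUC !inE eqxx orbT.
apply: connect_trans (proj1 (andP (hop u uU))) _.
apply: connect_trans (proj2 (andP (hop v vU))).
apply: induced_connect_sub (conn _ _ (fU u uU) (fU v vU)).
- exact: subsetUl.
- exact: subD1set.
Qed.

Lemma connect_isolated Ed U i v :
  (forall ed, ed \in Ed -> i \notin ed) -> connect (induced_rel Ed U) i v -> v = i.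
Proof.
move=> hEd /connectP[[|z p] /= + ->] //.
by case/andP=> /and3P[_ _ /hEd]; rewrite in_set2 eqxx.
Qed.

Lemma connect_contract_pendant Ed U W i j u v :
  (forall ed, ed \in Ed -> i \notin ed) -> U :\ i \subset W -> u != i -> v != i ->
  connect (induced_rel (Ed :|: [set [set i; j]]) U) u v -> connect (induced_rel Ed W) u v.
Proof.
move=> hEd sUW ui vi; pose f w := if w == i then j else w.
have fK w : w != i -> f w = w by rewrite /f => /negbTE ->.
rewrite -{2}(fK u ui) -{2}(fK v vi); apply: connect_map => x y /and3P[xU yU].
case/setUP=> [xyEd|/set1P xyij].
- have := hEd _ xyEd; rewrite in_set2 negb_or => /andP[ix iy].
  right; rewrite /induced_rel !fK 1?eq_sym // xyEd andbT.
  by rewrite !(subsetP sUW) // !inE 1?eq_sym ?ix ?iy.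
- left; have: x \in [set i; j] /\ y \in [set i; j] by rewrite -xyij !in_set2 !eqxx orbT.
  by case=> /set2P[->|->] /set2P[->|->]; rewrite /f ?eqxx //; case: eqP.
Qed.

End InducedConnectivity.

Section Presentations.
Variables (E : finType) (M : matroid E) (r : nat) (e : E).
Implicit Types (B : 'I_r -> {set E}) (X Y F : {set E}) (G : {set {set 'I_r}}).

Lemma idx_sub_eS B X Y : X \subset Y -> idx_sub_e B e X \subset idx_sub_e B e Y.
Proof.
by move=> sXY; apply/subsetP=> k; rewrite !inE => /andP[sX ->]; rewrite (subset_trans sX).
Qed.

Lemma mem_idx_sub_e_mcl B k l :
  e \in B k -> k \in idx_sub_e B e (mcl M (B k :|: B l)).
Proof. by move=> ek; rewrite inE ek andbT (subset_trans (subsetUl _ _) (sub_mcl _ _)). Qed.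

Lemma graph_on_notin V G k ed : is_graph_on V G -> k \notin V -> ed \in G -> k \notin ed.
Proof.
by move=> hG kV /hG[x [y [_ xV yV ->]]]; rewrite in_set2; apply/norP; split;
  apply: contraNneq kV => ->.
Qed.

Lemma presenting_connected_flat B G F :
  presenting M e B G -> mflat M F -> induced_connected G (idx_sub_e B e F).
Proof.
case=> _ conn flatF u v uF vF; have [<-|uv] := eqVneq u v; first exact: connect0.
have /andP[sAuF eu] : (B u \subset F) && (e \in B u) by move: uF; rewrite inE.
have /andP[sAvF ev] : (B v \subset F) && (e \in B v) by move: vF; rewrite inE.
have uV : u \in idx_sub_e B e setT by rewrite inE subsetT.
have vV : v \in idx_sub_e B e setT by rewrite inE subsetT.
apply: induced_connect_sub (conn u v uV vV uv u v _ _) => //.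
- by apply/idx_sub_eS/mcl_sub_flat; rewrite // subUset sAuF.
- exact: mem_idx_sub_e_mcl.
- by rewrite setUC; apply: mem_idx_sub_e_mcl.
Qed.

End Presentations.

Section Enlargement.
Variables (E : finType) (M : matroid E) (r : nat) (e : E) (A A' : 'I_r -> {set E}).
Hypotheses (sub_enlarged : forall k, A k \subset A' k)
           (enlarged_sub_mcl : forall k, A' k \subset mcl M (A k)).

Lemma mcl_setU_enlarged k l : mcl M (A' k :|: A' l) = mcl M (A k :|: A l).
Proof.
apply: mcl_squeeze; first exact: setUSS.
by rewrite subUset !(subset_trans (enlarged_sub_mcl _)) // mclS // (subsetUl, subsetUr).
Qed.

Lemma enlarged_sub_flat k F : mflat M F -> (A' k \subset F) = (A k \subset F).
Proof.
move=> flatF; apply/idP/idP; first exact: subset_trans (sub_enlarged k).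
by move=> sAF; apply: subset_trans (enlarged_sub_mcl k) (mcl_sub_flat sAF flatF).
Qed.

Hypothesis mem_enlarged : forall k, (e \in A' k) = (e \in A k).

Lemma idx_sub_e_enlarged F : mflat M F -> idx_sub_e A' e F = idx_sub_e A e F.
Proof. by move=> flatF; apply/setP=> k; rewrite !inE enlarged_sub_flat ?mem_enlarged. Qed.

Lemma presenting_enlarged G : presenting M e A' G <-> presenting M e A G.
Proof.
have flatT : mflat M setT by exact: subsetT.
rewrite /presenting idx_sub_e_enlarged //.
by split=> -[hG conn]; split=> // k l kV lV kl; move: (conn k l kV lV kl);
  rewrite mcl_setU_enlarged idx_sub_e_enlarged // mflat_mcl.
Qed.

Lemma minimal_presenting_enlarged G :
  minimal_presenting M e A' G <-> minimal_presenting M e A G.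
Proof.
by split=> -[/presenting_enlarged pG minG]; split=> // ed edG /presenting_enlarged;
  exact: minG.
Qed.

End Enlargement.

Section CloseAt.
Variables (E : finType) (M : matroid E) (r : nat) (A : 'I_r -> {set E}) (i : 'I_r).

Definition close_at (k : 'I_r) : {set E} := if k == i then mcl M (A i) else A k.

Lemma sub_close_at k : A k \subset close_at k.
Proof. by rewrite /close_at; case: eqP => [->|_]; rewrite ?sub_mcl. Qed.

Lemma close_at_sub_mcl k : close_at k \subset mcl M (A k).
Proof. by rewrite /close_at; case: eqP => [->|_]; rewrite ?sub_mcl. Qed.

Lemma mem_close_at e :
  e \notin mcl M (A i) :\: A i -> forall k, (e \in close_at k) = (e \in A k).
Proof.
move=> + k; rewrite /close_at in_setD; case: eqP => [->|//].
by case: (boolP (e \in A i)) => [eA|_ /negbTE //]; rewrite (subsetP (sub_mcl _ _)).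
Qed.

Section Pendant.
Variables (e : E) (j : 'I_r).
Hypotheses (e_notin_Ai : e \notin A i) (e_in_clAi : e \in mcl M (A i))
           (j_pendant : j \in idx_sub_e A e (mcl M (A i))).

Lemma pendant_not_vertex X : i \notin idx_sub_e A e X.
Proof. by rewrite inE (negbTE e_notin_Ai) andbF. Qed.

Lemma pendant_neq : j != i.
Proof. by apply: contraTneq j_pendant => ->; apply: pendant_not_vertex. Qed.

Lemma idx_sub_e_close_atD1 X : idx_sub_e close_at e X :\ i = idx_sub_e A e X.
Proof.
apply/setP=> k; rewrite !inE /close_at; case: eqP => [->|_] //=.
by rewrite (negbTE e_notin_Ai) andbF.
Qed.

Lemma sub_idx_sub_e_close_at X : idx_sub_e A e X \subset idx_sub_e close_at e X.
Proof. by rewrite -idx_sub_e_close_atD1 subD1set. Qed.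

Lemma close_at_pendant X : i \in idx_sub_e close_at e X -> j \in idx_sub_e A e X.
Proof.
move: j_pendant; rewrite !inE /close_at eqxx => /andP[sAj ->] /andP[sX _].
by rewrite (subset_trans sAj sX).
Qed.

Lemma close_at_vertex : i \in idx_sub_e close_at e setT.
Proof. by rewrite inE /close_at eqxx subsetT e_in_clAi. Qed.

Lemma presenting_pendant G :
  presenting M e A G -> presenting M e close_at (G :|: [set [set i; j]]).
Proof.
move=> pG; have [hG _] := pG; have subV := sub_idx_sub_e_close_at.
split.
- move=> ed /setUP[/hG[x [y [xy xV yV ->]]]|/set1P ->].
    by exists x, y; split; rewrite // (subsetP (subV _)).
  exists i, j; split; rewrite // 1?eq_sym ?pendant_neq ?close_at_vertex //.
  exact/(subsetP (subV _))/close_at_pendant/close_at_vertex.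
- move=> k l _ _ _; rewrite (mcl_setU_enlarged sub_close_at close_at_sub_mcl).
  apply: induced_connected_pendant pendant_neq _ _.
  + by move/close_at_pendant; apply: (subsetP (subV _)).
  + by rewrite idx_sub_e_close_atD1; apply: presenting_connected_flat pG (mflat_mcl _ _).
Qed.

Lemma presenting_pendant_contract G ed :
  presenting M e A G -> ed \in G ->
  presenting M e close_at ((G :|: [set [set i; j]]) :\ ed) -> presenting M e A (G :\ ed).
Proof.
move=> [hG _] edG [_ conn]; have subV := sub_idx_sub_e_close_at.
have avoid_i f : f \in G :\ ed -> i \notin f.
  by case/setD1P=> _; apply: graph_on_notin hG (pendant_not_vertex _).
split=> [f /setD1P[_ /hG] //|k l kV lV kl u v uX vX].
have sub_edges : (G :|: [set [set i; j]]) :\ ed \subset (G :\ ed) :|: [set [set i; j]].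
  by rewrite setDUl setUS // subsetDl.
have neq_i w : w \in idx_sub_e A e (mcl M (A k :|: A l)) -> w != i.
  by apply: contraTneq => ->; apply: pendant_not_vertex.
move: (conn k l (subsetP (subV _) k kV) (subsetP (subV _) l lV) kl).
rewrite (mcl_setU_enlarged sub_close_at close_at_sub_mcl).
move=> /(_ u v (subsetP (subV _) u uX) (subsetP (subV _) v vX)) uv.
have sub_vertices : idx_sub_e close_at e (mcl M (A k :|: A l)) :\ i \subset
                    idx_sub_e A e (mcl M (A k :|: A l)).
  by rewrite idx_sub_e_close_atD1.
exact: (connect_contract_pendant avoid_i sub_vertices (neq_i _ uX) (neq_i _ vX)
  (induced_connect_sub sub_edges (subxx _) uv)).
Qed.

Lemma pendant_edge_needed G :
  presenting M e A G -> ~ presenting M e close_at ((G :|: [set [set i; j]]) :\ [set i; j]).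
Proof.
move=> [hG _] [_ conn].
have avoid_i f : f \in (G :|: [set [set i; j]]) :\ [set i; j] -> i \notin f.
  case/setD1P=> fij /setUP[fG|/set1P fij']; last by rewrite fij' eqxx in fij.
  exact: graph_on_notin hG (pendant_not_vertex _) fG.
have e_in_i : e \in close_at i by rewrite /close_at eqxx.
have e_in_j : e \in close_at j.
  by move: j_pendant; rewrite /close_at (negbTE pendant_neq) inE => /andP[].
have jV : j \in idx_sub_e close_at e setT by rewrite inE subsetT.
have ij : i != j by rewrite eq_sym pendant_neq.
have := conn i j close_at_vertex jV ij i j.
rewrite (mem_idx_sub_e_mcl _ _ e_in_i) setUC (mem_idx_sub_e_mcl _ _ e_in_j).
by move=> /(_ isT isT) /(connect_isolated avoid_i) /eqP; rewrite (negbTE pendant_neq).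
Qed.

Lemma minimal_presenting_pendant G :
  minimal_presenting M e A G ->
  minimal_presenting M e close_at (G :|: [set [set i; j]]).
Proof.
move=> [pG minG]; split; first exact: presenting_pendant.
move=> ed /setUP[edG|/set1P ->]; last exact: pendant_edge_needed.
by move/(presenting_pendant_contract pG edG); apply: minG.
Qed.

End Pendant.
End CloseAt.

Theorem lemma3p6 (E : finType) (M : matroid E) (r : nat) (A : 'I_r -> {set E})
  (hr : r = dual_rank M)
  (hA : forall I : {set E}, dual_indep M I <-> partial_transversal A I)
  (e : E) (G : {set {set 'I_r}})
  (hG : minimal_presenting M e A G)
  (i : 'I_r) :
  let A' := fun k : 'I_r => if k == i then mcl M (A i) else A k in
  (e \notin mcl M (A i) :\: A i -> minimal_presenting M e A' G) /\
  (e \in mcl M (A i) :\: A i ->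
     forall j, j \in idx_sub_e A e (mcl M (A i)) ->
       minimal_presenting M e A' (G :|: [set [set i; j]])).
Proof.
split=> [e_notin|/setDP[e_in_cl e_notin] j j_pendant].
- apply/(minimal_presenting_enlarged (sub_close_at M A i) (close_at_sub_mcl M A i)) => //.
  exact: mem_close_at.
- exact: minimal_presenting_pendant.
Qed.
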